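(* Let $A$ be a cartesian cubical set. The canonical map $p:A^{\mathrm{I}}\to A\times A$ has the path-lifting property if and only if $A$ has $2$-box filling.
   Context: Cartesian cubical sets are presheaves on $\mathbb{B}^{op}$, where $\mathbb{B}$ is the category of finite sets $[n]=\{\bot,x_1,\dots,x_n,\top\}$ ($n\ge0$, $\bot\ne\top$) and functions preserving $\bot,\top$. $\mathrm{I}^n$ is the representable on $[n]$, $\mathrm{I}^n\cong\mathrm{I}\times\dots\times\mathrm{I}$ with $\mathrm{I}=\mathrm{I}^1$, $\mathrm{I}^0=1$; the two maps $[1]\to[0]$ in $\mathbb{B}$ give endpoints $0,1:1\to\mathrm{I}$, and $\partial\mathrm{I}=1+1\to\mathrm{I}$ is their copairing. $p:A^{\mathrm{I}}\to A^{\partial\mathrm{I}}\cong A\times A$ is induced by $\partial\mathrm{I}\to\mathrm{I}$. A map $q:E\to D$ has the path-lifting property if for each endpoint $\delta\in\{0,1\}$, $\delta:1\to\mathrm{I}$, every commutative square with $\delta$ on the left and $q$ on the right (i.e. maps $u:1\to E$, $v:\mathrm{I}\to D$ with $qu=v\delta$) has a diagonal filler $w:\mathrm{I}\to E$ with $w\delta=u$, $qw=v$. For $1\le i\le n$ and $d\in\{0,1\}$, the face $\alpha_i^d:\mathrm{I}^{n-1}\to\mathrm{I}^n$ inserts the endpoint $d$ in the $i$-th coordinate. For $e\in\{0,1\}$, the open box $\sqcup^n_e\rightarrowtail\mathrm{I}^n$ is the union in the subobject lattice of $\mathrm{I}^n$ of the images of all faces $\alpha_i^d$ with $(i,d)\ne(1,e)$.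 A cubical set $A$ has $n$-box filling if for each $e\in\{0,1\}$ every map $\sqcup^n_e\to A$ extends along the inclusion $\sqcup^n_e\rightarrowtail\mathrm{I}^n$. *)

(* Cartesian cubical sets as covariant functors B -> Type. *)
From mathcomp Require Import all_boot.
Set Implicit Arguments. Unset Strict Implicit. Unset Printing Implicit Defensive.

(* Elements of [m] = {bot, x_1..x_m, top}: inl false = bot (endpoint 0),
   inl true = top (endpoint 1), inr j = x_(j+1). *)
Definition pt (m : nat) : finType := (bool + 'I_m)%type.

(* Morphisms [n] -> [m] of B preserving bot, top: determined by the images
   of x_1..x_n. *)
Definition Bmor (n m : nat) : finType := {ffun 'I_n -> pt m}.

Definition Bid (n : nat) : Bmor n n := [ffun i => inr i].

(* Bcomp f g = g o f *)
Definition Bcomp n m k (f : Bmor n m) (g : Bmor m k) : Bmor n k :=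
  [ffun i => match f i with inl b => inl b | inr j => g j end].

Lemma Bcomp_assoc n m k l (f : Bmor n m) (g : Bmor m k) (h : Bmor k l) :
  Bcomp f (Bcomp g h) = Bcomp (Bcomp f g) h.
Proof. by apply/ffunP => i; rewrite !ffunE; case: (f i) => // j; rewrite ffunE. Qed.

(* Data of a (covariant) functor B -> Type: a presheaf on B^op. *)
Record cdata := CData {
  ob :> nat -> Type;
  act : forall n m, Bmor n m -> ob n -> ob m }.
Arguments act {c n m}.

Definition is_cubical_set (A : cdata) : Prop :=
  (forall n (x : A n), act (Bid n) x = x) /\
  (forall n m k (f : Bmor n m) (g : Bmor m k) (x : A n),
      act (Bcomp f g) x = act g (act f x)).

Record nat_trans (X Y : cdata) := NatTrans {
  nt :> forall n, X n -> Y n;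
  nt_nat : forall n m (f : Bmor n m) (x : X n), nt (act f x) = act f (nt x) }.
Arguments nt {X Y} n0 {n} : rename.

(* Representable I^n = y[n]. *)
Definition yon (n : nat) : cdata := @CData (fun m => Bmor n m : Type)
  (fun m k (h : Bmor m k) (f : Bmor n m) => Bcomp f h).
Definition Iv : cdata := yon 1.
Definition one : cdata := @CData (fun _ => unit) (fun _ _ _ x => x).
Definition prodc (X Y : cdata) : cdata := @CData (fun n => (X n * Y n)%type)
  (fun n m f xy => (act f xy.1, act f xy.2)).

Section Expo.
Variables (A Y : cdata).
Definition expo_act n m (f : Bmor n m)
  (a : nat_trans (prodc (yon n) Y) A) : nat_trans (prodc (yon m) Y) A.
Proof.
refine (@NatTrans (prodc (yon m) Y) A
  (fun k gy => nt a (Bcomp f gy.1, gy.2)) _).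
move=> k l h [g y] /=.
by rewrite -(nt_nat a) /= Bcomp_assoc.
Defined.
Definition expo : cdata :=
  @CData (fun n => nat_trans (prodc (yon n) Y) A) expo_act.
End Expo.

(* Endpoints 0,1 : 1 -> I, induced by the two maps [1] -> [0]. *)
Definition endpt (b : bool) (n : nat) : Bmor 1 n := [ffun _ => inl b].

Definition delta (b : bool) : nat_trans one Iv.
Proof.
refine (@NatTrans one Iv (fun n _ => endpt b n) _).
by move=> n m f x; apply/ffunP => i; rewrite !ffunE.
Defined.

Lemma Bcomp_id_l n m (f : Bmor n m) : Bcomp (Bid n) f = f.
Proof. by apply/ffunP => i; rewrite !ffunE. Qed.
Lemma Bcomp_id_r n m (f : Bmor n m) : Bcomp f (Bid m) = f.
Proof. by apply/ffunP => i; rewrite !ffunE; case: (f i) => // j; rewrite ffunE. Qed.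

(* p : A^I -> A^{dI} = A x A, restriction along the two endpoints
   (A^{dI}([n]) = Hom(y[n] x (1+1), A) identified with A([n]) x A([n]) by Yoneda). *)
Definition pathp (A : cdata) : nat_trans (expo A Iv) (prodc A A).
Proof.
refine (@NatTrans (expo A Iv) (prodc A A)
  (fun n a => (nt a (Bid n, endpt false n), nt a (Bid n, endpt true n))) _).
move=> n m f a /=.
have E b : (Bcomp f (Bid m), endpt b m) = @act (prodc (yon n) Iv) _ _ f (Bid n, endpt b n).
  rewrite /= Bcomp_id_l Bcomp_id_r; congr pair; by apply/ffunP => i; rewrite !ffunE.
by rewrite !E !(nt_nat a).
Defined.

Definition path_lifting (E D : cdata) (q : nat_trans E D) : Prop :=
  forall (b : bool) (u : nat_trans one E) (v : nat_trans Iv D),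
    (forall n (x : one n), q n (u n x) = v n (delta b n x)) ->
    exists w : nat_trans Iv E,
      (forall n (x : one n), w n (delta b n x) = u n x) /\
      (forall n (x : Iv n), q n (w n x) = v n x).

(* Face alpha_i^d : I^k -> I^(k+1) inserting endpoint d at coordinate i,
   induced (Yoneda) by the B-map [k+1] -> [k] sending x_i to d. *)
Definition degB k (i : 'I_k.+1) (d : bool) : Bmor k.+1 k :=
  [ffun j => match unlift i j with None => inl d | Some j' => inr j' end].
Definition face k (i : 'I_k.+1) (d : bool) m (g : Bmor k m) : Bmor k.+1 m :=
  Bcomp (degB i d) g.

(* Open box: union of the images of all faces alpha_i^d with (i,d) <> (1,e)
   (ord0 is the first coordinate). *)
Definition in_box k (e : bool) m (f : Bmor k.+1 m) : bool :=
  [exists i : 'I_k.+1, exists d : bool, exists g : Bmor k m,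
     ((i, d) != (ord0, e)) && (f == face i d g)].

Definition box_filling_succ (A : cdata) (k : nat) : Prop :=
  forall (e : bool) (phi : forall m (f : Bmor k.+1 m), in_box e f -> A m),
    (forall m l (h : Bmor m l) (f : Bmor k.+1 m) (pf : in_box e f)
            (pf' : in_box e (Bcomp f h)),
        phi l (Bcomp f h) pf' = act h (phi m f pf)) ->
    exists psi : nat_trans (yon k.+1) A,
      forall m (f : Bmor k.+1 m) (pf : in_box e f), psi m f = phi m f pf.

Definition has_box_filling (A : cdata) (n : nat) : Prop :=
  forall k, n = k.+1 -> box_filling_succ A k.

From Pilot Require Import Defs.
From mathcomp Require Import all_boot.
From Stdlib Require Import FunctionalExtensionality ProofIrrelevance.
Set Implicit Arguments. Unset Strict Implicit. Unset Printing Implicit Defensive.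

(* By the exponential adjunction, a map I -> A^I is a 2-cube of A.  A lifting
   problem against the endpoint b : 1 -> I consists of a path u (the point of
   A^I to start from) and a pair of paths v with v(b) = (u(0), u(1)); read as
   faces of a square, u sits at first coordinate b and the two components of
   v at second coordinate 0 and 1, so together they form exactly an open box
   missing the face (1, ~~ b), and a diagonal filler is exactly a filler of
   that box. *)

Lemma ord2P (j : 'I_2) : j = ord0 \/ j = ord_max.
Proof. by case: j => [[|[|k]] //= Hk]; [left | right]; apply/val_inj. Qed.

Definition ptmap m l (h : Bmor m l) (p : pt m) : pt l :=
  match p with inl b => inl b | inr j => h j end.

Lemma BcompE n m l (f : Bmor n m) (h : Bmor m l) i : Bcomp f h i = ptmap h (f i).
Proof. by rewrite ffunE. Qed.

Definition mor1 m (p : pt m) : Bmor 1 m := [ffun _ => p].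
Definition mor2 m (p q : pt m) : Bmor 2 m :=
  [ffun i => if i == ord0 then p else q].

Lemma mor1_eta m (x : Bmor 1 m) : x = mor1 (x ord0).
Proof. by apply/ffunP => i; rewrite ffunE (ord1 i). Qed.

Lemma mor2_eta m (f : Bmor 2 m) : f = mor2 (f ord0) (f ord_max).
Proof. by apply/ffunP => i; rewrite ffunE; case: (ord2P i) => ->. Qed.

Lemma mor2_0 m (p q : pt m) : mor2 p q ord0 = p.
Proof. by rewrite ffunE. Qed.

Lemma mor2_1 m (p q : pt m) : mor2 p q ord_max = q.
Proof. by rewrite ffunE. Qed.

Lemma Bcomp_mor1 m l (p : pt m) (h : Bmor m l) : Bcomp (mor1 p) h = mor1 (ptmap h p).
Proof. by apply/ffunP => i; rewrite !ffunE. Qed.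

Lemma Bcomp_mor2 m l (p q : pt m) (h : Bmor m l) :
  Bcomp (mor2 p q) h = mor2 (ptmap h p) (ptmap h q).
Proof. by apply/ffunP => i; rewrite !ffunE; case: (i == ord0). Qed.

Lemma face_coord k (i : 'I_k.+1) d m (g : Bmor k m) : face i d g i = inl d.
Proof. by rewrite ffunE /degB ffunE unlift_none. Qed.

Lemma in_box2P e m (f : Bmor 2 m) :
  in_box e f -> f ord0 = inl (~~ e) \/ exists d, f ord_max = inl d.
Proof.
case/existsP => i /existsP [d /existsP [g /andP [ne /eqP Ef]]].
have fi : f i = inl d by rewrite Ef face_coord.
case: (ord2P i) => Ei; subst i; last by right; exists d.
by left; rewrite fi; case: d e ne {fi Ef} => [] [].
Qed.

Lemma in_box2_0 e m (f : Bmor 2 m) : f ord0 = inl (~~ e) -> in_box e f.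
Proof.
move=> f0; apply/existsP; exists ord0; apply/existsP; exists (~~ e).
apply/existsP; exists (mor1 (f ord_max)); apply/andP; split.
  by rewrite xpair_eqE; case: e {f0}.
apply/eqP/ffunP => j; rewrite ffunE /degB ffunE.
case: unliftP => [j' ->|->] //=; rewrite ffunE.
by have -> : lift ord0 j' = ord_max by apply/val_inj; rewrite (ord1 j').
Qed.

Lemma in_box2_1 e m (f : Bmor 2 m) d : f ord_max = inl d -> in_box e f.
Proof.
move=> f1; apply/existsP; exists ord_max; apply/existsP; exists d.
apply/existsP; exists (mor1 (f ord0)); apply/andP; split; first by [].
apply/eqP/ffunP => j; rewrite ffunE /degB ffunE.
case: unliftP => [j' ->|->] //=; rewrite ffunE.
by have -> : lift ord_max j' = ord0 by apply/val_inj; rewrite (ord1 j').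
Qed.

Lemma in_box_mor2_start e m (q : pt m) : in_box e (mor2 (inl (~~ e)) q).
Proof. by apply: in_box2_0; rewrite mor2_0. Qed.

Lemma in_box_mor2_end e m (p : pt m) d : in_box e (mor2 p (inl d)).
Proof. exact: in_box2_1 (mor2_1 _ _). Qed.

Lemma nat_trans_ext X Y (a b : nat_trans X Y) :
  (forall n x, a n x = b n x) -> a = b.
Proof.
case: a b => [a a_nat] [b b_nat] /= ab.
have ab' : a = b.
  by apply: functional_extensionality_dep => n; apply: functional_extensionality.
by subst b; congr NatTrans; apply: proof_irrelevance.
Qed.

Lemma const_expo_shift (A Y : cdata) (u : nat_trans Defs.one (expo A Y))
    m l (h : Bmor m l) k (g : Bmor l k) (y : Y k) :
  u l tt k (g, y) = u m tt k (Bcomp h g, y).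
Proof. by rewrite -[tt]/(@act Defs.one _ _ h tt) (nt_nat u). Qed.

Section Curry.
Variable A : cdata.

(* A 2-cube of A is the same as a path of paths: the first coordinate is the
   outer path, the second the inner one. *)
Section CurryCube.
Variable psi : nat_trans (yon 2) A.

Definition curry2_at n (x : Bmor 1 n) : nat_trans (prodc (yon n) Iv) A.
Proof.
refine (@NatTrans (prodc (yon n) Iv) A
  (fun k gy => psi k (mor2 (Bcomp x gy.1 ord0) (gy.2 ord0))) _).
move=> k l h [g y] /=; rewrite -(nt_nat psi) /= Bcomp_mor2 !BcompE.
by case: (x ord0) => //= j; rewrite BcompE.
Defined.

Definition curry2 : nat_trans Iv (expo A Iv).
Proof.
refine (@NatTrans Iv (expo A Iv) curry2_at _).
by move=> n m f x; apply: nat_trans_ext => k [g y] /=; rewrite Bcomp_assoc.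
Defined.

End CurryCube.

Definition uncurry2 (w : nat_trans Iv (expo A Iv)) : nat_trans (yon 2) A.
Proof.
refine (@NatTrans (yon 2) A
  (fun m f => w m (mor1 (f ord0)) m (Bid m, mor1 (f ord_max))) _).
move=> m l h f /=; rewrite !BcompE -!Bcomp_mor1.
rewrite -[Bcomp (mor1 _) h]/(@act Iv _ _ h _) (nt_nat w) /=.
by rewrite -(nt_nat (w m _)) /= Bcomp_id_l Bcomp_id_r.
Defined.

End Curry.

Section BoxOfSquare.
Variables (A : cdata) (b : bool).
Variables (u : nat_trans Defs.one (expo A Iv)) (v : nat_trans Iv (prodc A A)).
Hypothesis square : forall n (x : Defs.one n), pathp A n (u n x) = v n (delta b n x).

(* Only meaningful at an endpoint; an interior point selects the first component. *)
Definition pick_end m (p : pt m) (xy : A m * A m) : A m :=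
  if p is inl true then xy.2 else xy.1.

Lemma pick_end_act m l (h : Bmor m l) d (xy : A m * A m) :
  pick_end (inl d) (@act (prodc A A) _ _ h xy) = act h (pick_end (inl d) xy).
Proof. by case: d. Qed.

Lemma v_start m :
  v m (mor1 (inl b)) = (u m tt m (Bid m, mor1 (inl false)), u m tt m (Bid m, mor1 (inl true))).
Proof. by rewrite -[mor1 _]/(delta b m tt) -square. Qed.

Definition box_of_square m (f : Bmor 2 m) (_ : in_box (~~ b) f) : A m :=
  if f ord0 == inl b then u m tt m (Bid m, mor1 (f ord_max))
  else pick_end (f ord_max) (v m (mor1 (f ord0))).
Arguments box_of_square {m} f _.

Lemma box_of_square_nat m l (h : Bmor m l) (f : Bmor 2 m) pf pf' :
  box_of_square (Bcomp f h) pf' = act h (box_of_square f pf).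
Proof.
rewrite /box_of_square !BcompE.
have [f0|f0] := eqVneq (f ord0) (inl b).
  rewrite f0 eqxx (const_expo_shift u h) -(nt_nat (u m tt)) /=.
  by rewrite Bcomp_id_l Bcomp_id_r Bcomp_mor1.
have [|[d f1]] := in_box2P pf; first by rewrite negbK => f0'; rewrite f0' eqxx in f0.
have vh : v l (mor1 (ptmap h (f ord0))) = @act (prodc A A) _ _ h (v m (mor1 (f ord0))).
  by rewrite -Bcomp_mor1 -(nt_nat v).
rewrite f1 -pick_end_act -vh.
by case: eqP => // ->; rewrite v_start; case: d {f1}.
Qed.

Variable psi : nat_trans (yon 2) A.
Hypothesis psi_fills : forall m f pf, psi m f = box_of_square f pf.

Lemma curry2_fills_start n : curry2 psi n (delta b n tt) = u n tt.
Proof.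
apply: nat_trans_ext => k [g y] /=; rewrite BcompE ffunE /=.
have pf : in_box (~~ b) (mor2 (inl b : pt k) (y ord0)) by apply: in_box2_0; rewrite mor2_0 negbK.
rewrite (psi_fills pf) /box_of_square mor2_0 eqxx mor2_1.
by rewrite (const_expo_shift u g) Bcomp_id_r -mor1_eta.
Qed.

Lemma curry2_fills_ends n x : pathp A n (curry2 psi n x) = v n x.
Proof.
rewrite /= Bcomp_id_r !ffunE.
rewrite !(psi_fills (in_box_mor2_end _ _ _)).
rewrite /box_of_square !mor2_0 !mor2_1 [in RHS](mor1_eta x).
by case: eqP => [->|_]; rewrite ?v_start //=; case: (v n _).
Qed.

End BoxOfSquare.

Section SquareOfBox.
Variables (A : cdata) (e : bool) (phi : forall m (f : Bmor 2 m), in_box e f -> A m).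
Arguments phi {m} f _.
Hypothesis phi_nat : forall m l (h : Bmor m l) (f : Bmor 2 m) pf pf',
  phi (Bcomp f h) pf' = act h (phi f pf).

Lemma phi_ext m (f1 f2 : Bmor 2 m) pf1 pf2 : f1 = f2 -> phi f1 pf1 = phi f2 pf2.
Proof. by move=> f12; subst f2; congr phi; apply: bool_irrelevance. Qed.

Lemma phi_act m l (h : Bmor m l) (f : Bmor 2 m) (f' : Bmor 2 l) pf pf' :
  f' = Bcomp f h -> phi f' pf' = act h (phi f pf).
Proof. by move=> ff'; subst f'; apply: phi_nat. Qed.

Definition start_of_box_at n : nat_trans (prodc (yon n) Iv) A.
Proof.
refine (@NatTrans (prodc (yon n) Iv) A
  (fun k gy => phi (mor2 (inl (~~ e)) (gy.2 ord0)) (in_box_mor2_start _ _)) _).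
by move=> k l h [g y] /=; apply: phi_act; rewrite Bcomp_mor2 BcompE.
Defined.

Definition start_of_box : nat_trans Defs.one (expo A Iv).
Proof.
refine (@NatTrans Defs.one (expo A Iv) (fun n _ => start_of_box_at n) _).
by move=> n m f x; apply: nat_trans_ext.
Defined.

Definition ends_of_box : nat_trans Iv (prodc A A).
Proof.
refine (@NatTrans Iv (prodc A A)
  (fun n x => (phi (mor2 (x ord0) (inl false)) (in_box_mor2_end _ _ _),
               phi (mor2 (x ord0) (inl true)) (in_box_mor2_end _ _ _))) _).
by move=> n m f x /=; congr pair; apply: phi_act; rewrite Bcomp_mor2 BcompE.
Defined.

Lemma square_of_box n (x : Defs.one n) :
  pathp A n (start_of_box n x) = ends_of_box n (delta (~~ e) n x).
Proof. by congr pair; apply: phi_ext; rewrite !ffunE. Qed.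

Variable w : nat_trans Iv (expo A Iv).
Hypothesis w_start : forall n (x : Defs.one n), w n (delta (~~ e) n x) = start_of_box n x.
Hypothesis w_ends : forall n (x : Iv n), pathp A n (w n x) = ends_of_box n x.

Lemma uncurry2_fills m (f : Bmor 2 m) pf : uncurry2 w m f = phi f pf.
Proof.
have [f0|[d f1]] := in_box2P pf.
  rewrite /= f0 -[mor1 _]/(delta (~~ e) m tt) w_start /=.
  by apply: phi_ext; rewrite [RHS]mor2_eta f0 ffunE.
have [ends0 ends1] := w_ends (mor1 (f ord0)).
rewrite (phi_ext pf (in_box_mor2_end _ (f ord0) d)); last by rewrite [LHS]mor2_eta f1.
rewrite /= f1.
by case: d {f1}; [rewrite ends1 | rewrite ends0]; apply: phi_ext; rewrite ffunE.
Qed.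

End SquareOfBox.

Lemma path_lifting_of_box_filling (A : cdata) :
  box_filling_succ A 1 -> path_lifting (pathp A).
Proof.
move=> fill b u v square.
have [psi psi_fills] := fill (~~ b) _ (box_of_square_nat square).
exists (curry2 psi); split.
  by move=> n []; apply: curry2_fills_start.
exact: curry2_fills_ends.
Qed.

Lemma box_filling_of_path_lifting (A : cdata) :
  path_lifting (pathp A) -> box_filling_succ A 1.
Proof.
move=> lift e phi phi_nat.
have [w [w_start w_ends]] := lift (~~ e) _ _ (square_of_box phi_nat).
by exists (uncurry2 w); apply: uncurry2_fills.
Qed.

Theorem proposition2p8 (A : cdata) (HA : is_cubical_set A) :
  path_lifting (pathp A) <-> has_box_filling A 2.
Proof.
split=> [lift _ [<-] | fill]; first exact: box_filling_of_path_lifting.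
exact: path_lifting_of_box_filling (fill 1 erefl).
Qed.
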